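(* Let $k$ be a field and $A$ a graded $k$-subalgebra of the polynomial ring $B=k[X_1,\dots,X_n]$ with standard grading. Suppose there is a retraction $\pi:B\to A$ with $\pi(B_+)\subseteq B_+$. Then there exist an invertible matrix $\sigma\in GL_n(k)$ (acting by linear change of variables $X_i\mapsto\sigma(X_i)=\sum_j\sigma_{ij}X_j$) and an integer $d\le n$ such that $A=k[\sigma(X_1),\dots,\sigma(X_d)]$. In particular $A$ is a polynomial ring over $k$.
   Context: The standard grading has $B_i$ the homogeneous polynomials of degree $i$; $B_+=\bigoplus_{i\ge1}B_i$. $A$ graded means $A=\bigoplus_i(A\cap B_i)$. A retraction $\pi:B\to A$ is a ring homomorphism onto $A$ restricting to the identity on $A$. *)

From HB Require Import structures.
From mathcomp Require Import all_boot all_order all_algebra.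
Set Implicit Arguments. Unset Strict Implicit. Unset Printing Implicit Defensive.
Import GRing.Theory.
Local Open Scope ring_scope.

(* Multivariate polynomial ring k[X_0,...,X_{n-1}], built as iterated
   univariate polynomials: mpolyR k 0 = k, mpolyR k (n+1) = (mpolyR k n)[X_n].
   Variables are indexed 0..n-1 (paper: X_1..X_n). *)
Fixpoint mpolyR (k : comNzRingType) (n : nat) : comNzRingType :=
  match n with 0 => k | n'.+1 => {poly mpolyR k n'} : comNzRingType end.

Fixpoint mcst (k : comNzRingType) (n : nat) : k -> mpolyR k n :=
  match n with 0 => fun c => c | n'.+1 => fun c => (mcst n' c)%:P end.

(* the variable X_i (0 if i >= n) *)
Fixpoint mX (k : comNzRingType) (n : nat) (i : nat) : mpolyR k n :=
  match n with
  | 0 => 0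
  | n'.+1 => if (i < n')%N then (mX k n' i)%:P else if (i == n')%N then 'X else 0
  end.

(* homogeneous component of (total) degree d, standard grading *)
Fixpoint hcomp (k : comNzRingType) (n : nat) (d : nat) : mpolyR k n -> mpolyR k n :=
  match n with
  | 0 => fun c => if (d == 0)%N then c else 0
  | n'.+1 => fun p =>
      \poly_(j < size p) (if (j <= d)%N then hcomp (d - j)%N p`_j else 0)
  end.

Fixpoint meval (k : comNzRingType) (n m : nat) (ys : nat -> mpolyR k m)
  : mpolyR k n -> mpolyR k m :=
  match n with
  | 0 => fun c => mcst m c
  | n'.+1 => fun p => \sum_(j < size p) meval ys p`_j * ys n' ^+ j
  end.

Definition sigmaX (k : comNzRingType) (n : nat) (s : 'M[k]_n) (i : nat)
  : mpolyR k n :=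
  match (insub i : option 'I_n) with
  | Some i' => \sum_(j < n) mcst n (s i' j) * mX k n j
  | None => 0
  end.

From HB Require Import structures.
From mathcomp Require Import all_boot all_order all_algebra zify.
From Stdlib Require Import Classical.
Set Implicit Arguments. Unset Strict Implicit. Unset Printing Implicit Defensive.
Import GRing.Theory.
Local Open Scope ring_scope.

(* Let A_1 be the space of linear forms in A, spanned by the rows of a matrix W;
   with sigma = row_ebase W and d = rank W, the forms sigma(X_1), ..., sigma(X_d)
   are a basis of A_1, so it suffices that A = k[A_1].  As A is graded, it is
   enough to show by strong induction on e that every homogeneous h in A of
   degree e >= 2 lies in k[A_1].  Such an h lies in B_+, hence h = sum X_i c_i
   with c_i homogeneous of degree e - 1, and applying the retraction gives
   h = sum pi(X_i) pi(c_i).  Both factors lie in A and have no constant term,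
   so the degree-e part of each product only involves homogeneous components
   of elements of A of degrees strictly between 0 and e. *)

Lemma horner_map_sum (R S : comNzRingType) (f : R -> S) (y : S) (p : {poly R}) :
  f 0 = 0 -> (map_poly f p).[y] = \sum_(j < size p) f p`_j * y ^+ j.
Proof.
move=> f0; rewrite (@horner_coef_wide _ (size p)); last exact: size_poly.
by apply: eq_bigr => j _; rewrite coef_map_id0.
Qed.

Lemma rmorphism_eqfun (R S : pzRingType) (f : R -> S) (g : {rmorphism R -> S}) :
  f =1 g -> nmod_morphism f /\ monoid_morphism f.
Proof.
move=> fg; split; split; rewrite ?fg ?rmorph0 ?rmorph1 // => a b;
by rewrite !fg (rmorphD, rmorphM).
Qed.

Section HornerMap.
Variables (R S : comNzRingType) (f : R -> S).

Lemma horner_map_rmorph (y : S) : (exists g : {rmorphism R -> S}, f =1 g) ->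
  exists g : {rmorphism {poly R} -> S}, (fun p => (map_poly f p).[y]) =1 g.
Proof.
move=> [g fg]; have cgy : commr_rmorph g y by move=> a; exact: mulrC.
exists (horner_morph cgy) => p; rewrite /horner_morph; congr (_.[_]).
by apply: eq_map_poly.
Qed.
End HornerMap.

Section Constants.
Variable k : comNzRingType.

Lemma mcst_rmorph n : exists g : {rmorphism k -> mpolyR k n}, mcst n =1 g.
Proof.
elim: n => [|n [g gE]]; first by exists idfun.
by exists (polyC \o g)%FUN => c /=; rewrite gE.
Qed.

Fact mcst_nmod n : nmod_morphism (@mcst k n).
Proof. by have [g /rmorphism_eqfun[]] := mcst_rmorph n. Qed.
Fact mcst_monoid n : monoid_morphism (@mcst k n).
Proof. by have [g /rmorphism_eqfun[]] := mcst_rmorph n. Qed.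
HB.instance Definition _ n :=
  GRing.isNmodMorphism.Build _ _ (@mcst k n) (mcst_nmod n).
HB.instance Definition _ n :=
  GRing.isMonoidMorphism.Build _ _ (@mcst k n) (mcst_monoid n).
End Constants.

Section Eval.
Variables (k : comNzRingType) (m : nat) (ys : nat -> mpolyR k m).

Lemma meval_rmorph n : exists g : {rmorphism mpolyR k n -> mpolyR k m}, meval ys =1 g.
Proof.
elim: n => [|n IH]; first by exists (mcst m : {rmorphism k -> mpolyR k m}).
have [g gE] := horner_map_rmorph (ys n) IH; exists g => p /=.
rewrite -gE horner_map_sum //.
by case: (IH) => h hE; rewrite hE rmorph0.
Qed.

Fact meval_nmod n : nmod_morphism (@meval k n m ys).
Proof. by have [g /rmorphism_eqfun[]] := meval_rmorph n. Qed.
Fact meval_monoid n : monoid_morphism (@meval k n m ys).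
Proof. by have [g /rmorphism_eqfun[]] := meval_rmorph n. Qed.
HB.instance Definition _ n :=
  GRing.isNmodMorphism.Build _ _ (@meval k n m ys) (meval_nmod n).
HB.instance Definition _ n :=
  GRing.isMonoidMorphism.Build _ _ (@meval k n m ys) (meval_monoid n).

Lemma mevalS n (p : mpolyR k n.+1) : meval ys p = (map_poly (meval ys) p).[ys n].
Proof. by rewrite horner_map_sum ?rmorph0. Qed.

Lemma meval_mcst n c : meval ys (mcst n c) = mcst m c.
Proof. by elim: n => [|n IH] //; rewrite mevalS /= map_polyC hornerC. Qed.

Lemma meval_mX n i : (i < n)%N -> meval ys (mX k n i) = ys i.
Proof.
elim: n => [|n IH] // lt_in; rewrite mevalS /=.
case: ltnP => [lt_in'|le_ni]; first by rewrite map_polyC hornerC; apply: IH.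
have -> : i = n by apply/eqP; rewrite eqn_leq le_ni andbT -ltnS.
by rewrite eqxx map_polyX hornerX.
Qed.
End Eval.

Definition linform (k : comNzRingType) n (v : 'rV[k]_n) : mpolyR k n :=
  \sum_(j < n) mcst n (v 0 j) * mX k n j.

Section LinearForms.
Variable k : comNzRingType.

Lemma linform_mulmx n m (u : 'rV[k]_m) (W : 'M[k]_(m, n)) :
  linform (u *m W) = \sum_(i < m) mcst n (u 0 i) * linform (row i W).
Proof.
rewrite /linform; under eq_bigr => j _ do rewrite mxE rmorph_sum mulr_suml.
rewrite exchange_big; apply: eq_bigr => i _; rewrite mulr_sumr.
by apply: eq_bigr => j _; rewrite !mxE rmorphM mulrA.
Qed.
End LinearForms.

Section Subalgebra.
Variables (k : comNzRingType) (n : nat) (A : mpolyR k n -> Prop).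
Hypotheses (hAk : forall c, A (mcst n c)) (hAD : forall a b, A a -> A b -> A (a + b))
  (hAM : forall a b, A a -> A b -> A (a * b)).

Lemma subalg0 : A 0.
Proof. rewrite -(rmorph0 (mcst n)); exact: hAk. Qed.

Lemma subalg_sum I (r : seq I) (P : pred I) F :
  (forall i, P i -> A (F i)) -> A (\sum_(i <- r | P i) F i).
Proof. by move=> AF; apply: big_ind => //; exact: subalg0. Qed.

Lemma subalg_exp a j : A a -> A (a ^+ j).
Proof.
move=> Aa; elim: j => [|j IH]; last by rewrite exprS; apply: hAM.
rewrite expr0 -(rmorph1 (mcst n)); exact: hAk.
Qed.

Lemma subalg_meval d (ys : nat -> mpolyR k n) (q : mpolyR k d) :
  (forall i, (i < d)%N -> A (ys i)) -> A (meval ys q).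
Proof.
elim: d q => [|d IH] q Ays //=; apply: subalg_sum => j _; apply: hAM.
  by apply: IH => i lt_id; apply/Ays/ltnW.
exact/subalg_exp/Ays.
Qed.

Lemma subalg_linform_mulmx m (u : 'rV[k]_m) (W : 'M[k]_(m, n)) :
  (forall i, A (linform (row i W))) -> A (linform (u *m W)).
Proof. by move=> AW; rewrite linform_mulmx; apply: subalg_sum => i _; apply: hAM. Qed.
End Subalgebra.

(* The substitution X_i |-> X_i T into a fresh variable T: the coefficient of
   T^e is the homogeneous component of degree e. *)
Fixpoint hcomp_poly (k : comNzRingType) (n : nat) : mpolyR k n -> {poly mpolyR k n} :=
  match n return mpolyR k n -> {poly mpolyR k n} with
  | 0 => fun c => c%:P
  | n'.+1 => fun p =>
      (map_poly (fun c => map_poly polyC (@hcomp_poly k n' c)) p).['X%:P * 'X]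
  end.

Section HcompPoly.
Variable k : comNzRingType.

Lemma hcomp_poly_rmorph n :
  exists g : {rmorphism mpolyR k n -> {poly mpolyR k n}}, @hcomp_poly k n =1 g.
Proof.
elim: n => [|n [g gE]]; first by exists (polyC : {rmorphism k -> {poly k}}).
have [|h hE] := horner_map_rmorph ('X%:P * 'X)
  (f := fun c => map_poly polyC (@hcomp_poly k n c)).
  by exists (map_poly polyC \o g)%FUN => c /=; rewrite gE.
by exists h.
Qed.

Fact hcomp_poly_nmod n : nmod_morphism (@hcomp_poly k n).
Proof. by have [g /rmorphism_eqfun[]] := hcomp_poly_rmorph n. Qed.
Fact hcomp_poly_monoid n : monoid_morphism (@hcomp_poly k n).
Proof. by have [g /rmorphism_eqfun[]] := hcomp_poly_rmorph n. Qed.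
HB.instance Definition _ n :=
  GRing.isNmodMorphism.Build _ _ (@hcomp_poly k n) (hcomp_poly_nmod n).
HB.instance Definition _ n :=
  GRing.isMonoidMorphism.Build _ _ (@hcomp_poly k n) (hcomp_poly_monoid n).

Lemma coef_hcomp_poly n (b : mpolyR k n) e : (hcomp_poly b)`_e = hcomp e b.
Proof.
elim: n b e => [|n IH] b e; first by rewrite /= coefC.
rewrite /= horner_map_sum ?rmorph0 // coef_sum poly_def; apply: eq_bigr => j _.
rewrite exprMn -rmorphXn mulrA coefMXn ltnNge.
case: (leqP j e) => je /=; last by rewrite scale0r.
by rewrite coefMC coef_map /= IH mul_polyC.
Qed.

Lemma hcomp_poly1 n (b : mpolyR k n) : (hcomp_poly b).[1] = b.
Proof.
elim: n b => [|n IH] b; first by rewrite /= hornerC.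
rewrite /= horner_map_sum ?rmorph0 // horner_sum -[RHS]coefK poly_def.
apply: eq_bigr => j _; rewrite hornerM horner_exp hornerMX hornerC mulr1.
by rewrite -[1 in LHS]polyC1 horner_map IH mul_polyC.
Qed.

Lemma hcomp_polyS n (p : mpolyR k n.+1) :
  hcomp_poly p = (map_poly (map_poly polyC \o @hcomp_poly k n) p).['X%:P * 'X].
Proof. by []. Qed.

Lemma hcomp_poly_mX n i : (i < n)%N -> hcomp_poly (mX k n i) = (mX k n i)%:P * 'X.
Proof.
elim: n => [|n IH] // lt_in; rewrite hcomp_polyS /=.
case: ltnP => [lt_in'|le_ni].
  by rewrite map_polyC hornerC /= IH // rmorphM /= map_polyC map_polyX.
have -> : i = n by apply/eqP; rewrite eqn_leq le_ni andbT -ltnS.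
by rewrite eqxx map_polyX hornerX.
Qed.
End HcompPoly.

Section Hcomp.
Variable k : comNzRingType.

Fact hcomp_nmod n e : nmod_morphism (@hcomp k n e).
Proof.
by split=> [|a b]; rewrite -!coef_hcomp_poly ?rmorph0 ?coef0 // rmorphD coefD.
Qed.
HB.instance Definition _ n e :=
  GRing.isNmodMorphism.Build _ _ (@hcomp k n e) (hcomp_nmod n e).

Lemma hcomp_sum n e I (r : seq I) (P : pred I) (F : I -> mpolyR k n) :
  hcomp e (\sum_(i <- r | P i) F i) = \sum_(i <- r | P i) hcomp e (F i).
Proof. exact: raddf_sum. Qed.

Lemma coef_hcomp n e (p : mpolyR k n.+1) j :
  (hcomp e p)`_j = if (j <= e)%N then hcomp (e - j) p`_j else 0.
Proof.
rewrite /= coef_poly; case: ltnP => // le_pj.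
by rewrite nth_default // raddf0 if_same.
Qed.

Lemma hcompM n e (a b : mpolyR k n) :
  hcomp e (a * b) = \sum_(j < e.+1) hcomp j a * hcomp (e - j) b.
Proof.
rewrite -coef_hcomp_poly rmorphM coefM.
by under eq_bigr do rewrite !coef_hcomp_poly.
Qed.

Lemma hcomp_mX n e i : (i < n)%N ->
  hcomp e (mX k n i) = if e == 1%N then mX k n i else 0.
Proof.
move=> lt_in; rewrite -coef_hcomp_poly hcomp_poly_mX // coefMX coefC.
by case: e => [|[]].
Qed.

Lemma hcompK n i e (b : mpolyR k n) :
  hcomp i (hcomp e b) = if i == e then hcomp e b else 0.
Proof.
elim: n i e b => [|n IH] i e b.
  by rewrite /=; case: (i =P 0) => [->|]; case: (e =P 0) => [->|] //= ?; case: eqP.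
apply/polyP => j; rewrite (coef_hcomp _ _ j).
case: eqP => [<-|ne_ie].
  by rewrite (coef_hcomp _ _ j); case: leqP => // le_ji; rewrite IH eqxx.
rewrite -[RHS]/((0 : {poly mpolyR k n})`_j) coef0; case: leqP => // le_ji.
rewrite (coef_hcomp _ _ j); case: leqP => [le_je|_]; last by rewrite raddf0.
by rewrite IH eqn_sub2rE // (introF eqP ne_ie).
Qed.

Lemma sum_hcomp n (b : mpolyR k n) : b = \sum_(e < size (hcomp_poly b)) hcomp e b.
Proof.
rewrite -{1}(hcomp_poly1 b) horner_coef.
by under eq_bigr do rewrite expr1n mulr1 coef_hcomp_poly.
Qed.

Lemma hcomp0_mcst n (b : mpolyR k n) : exists c, hcomp 0 b = mcst n c.
Proof.
elim: n b => [|n IH] b; first by exists b.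
have [c hc] := IH b`_0; exists c.
apply/polyP => j; rewrite (coef_hcomp _ _ j) coefC.
by case: j => [|j] //=; rewrite hc.
Qed.

Lemma hcomp1_linear n (b : mpolyR k n) :
  exists v : nat -> k, hcomp 1 b = \sum_(j < n) mcst n (v j) * mX k n j.
Proof.
elim: n b => [|n IH] b; first by exists (fun=> 0); rewrite big_ord0.
have [v hv] := IH b`_0; have [c hc] := hcomp0_mcst b`_1.
exists (fun j => if (j < n)%N then v j else c).
have -> : hcomp 1 b = (hcomp 1 b`_0)%:P + (hcomp 0 b`_1)%:P * 'X.
  apply/polyP => j; rewrite (coef_hcomp _ _ j) coefD coefMX !coefC.
  by case: j => [|[|j]] //=; rewrite ?addr0 ?add0r.
rewrite hv hc big_ord_recr /= ltnn eqxx rmorph_sum /=; congr (_ + _).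
by apply: eq_bigr => j _; rewrite ltn_ord polyCM.
Qed.

Lemma hcomp0_eq0_ideal n (b : mpolyR k n) : hcomp 0 b = 0 ->
  exists c : nat -> mpolyR k n, b = \sum_(i < n) mX k n i * c i.
Proof.
elim: n b => [|n IH] b; first by exists (fun=> 0); rewrite big_ord0.
move=> /(congr1 (fun q : {poly mpolyR k n} => q`_0)); rewrite (coef_hcomp _ _ 0) coef0.
move=> /IH[c hc]; exists (fun i => if (i < n)%N then (c i)%:P else drop_poly 1 b).
rewrite big_ord_recr /= ltnn eqxx -[LHS](poly_take_drop 1) expr1 mulrC; congr (_ + _).
under eq_bigr => i _ do rewrite ltn_ord -polyCM.
rewrite -rmorph_sum -hc; apply/polyP => j; rewrite coef_take_poly coefC.
by case: j.
Qed.

Lemma hcomp_mXM n e i (c : mpolyR k n) : (i < n)%N ->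
  hcomp e.+1 (mX k n i * c) = mX k n i * hcomp e c.
Proof.
move=> lt_in; rewrite hcompM !big_ord_recl big1 ?addr0 => [|j _].
  by rewrite !hcomp_mX // mul0r add0r /= subn1.
by rewrite hcomp_mX // mul0r.
Qed.

Lemma hcomp1_linform n (b : mpolyR k n) : exists v, hcomp 1 b = linform v.
Proof.
have [v ->] := hcomp1_linear b; exists (\row_j v j).
by apply: eq_bigr => j _; rewrite mxE.
Qed.
End Hcomp.

Section RetractionGeneratedInDegreeOne.
Variables (k : comNzRingType) (n : nat) (A S : mpolyR k n -> Prop).
Variable pi : {rmorphism mpolyR k n -> mpolyR k n}.
Hypotheses (hAgr : forall a i, A a -> A (hcomp i a)) (hpiA : forall b, A (pi b))
  (hpiid : forall a, A a -> pi a = a)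
  (hpiplus : forall b, hcomp 0 b = 0 -> hcomp 0 (pi b) = 0).
Hypotheses (hSk : forall c, S (mcst n c)) (hSD : forall a b, S a -> S b -> S (a + b))
  (hSM : forall a b, S a -> S b -> S (a * b)) (hS1 : forall a, A a -> S (hcomp 1 a)).

Lemma retract_hcomp_subalg e a : A a -> S (hcomp e a).
Proof.
elim/ltn_ind: e a => -[|[|e]] IH a Aa.
- by have [c ->] := hcomp0_mcst a; apply: hSk.
- exact: hS1.
set h := hcomp e.+2 a.
have Ah : A h by apply: hAgr.
have hE : hcomp e.+2 h = h by rewrite hcompK eqxx.
have [c hc] : exists c : nat -> mpolyR k n, h = \sum_(i < n) mX k n i * c i.
  by apply: hcomp0_eq0_ideal; rewrite hcompK.
have {}hc : h = \sum_(i < n) pi (mX k n i) * pi (hcomp e.+1 (c i)).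
  rewrite -(hpiid Ah) -{1}hE {1}hc hcomp_sum rmorph_sum.
  by apply: eq_bigr => i _; rewrite hcomp_mXM // rmorphM.
rewrite -/h -hE {1}hc hcomp_sum; apply: (subalg_sum hSk hSD) => i _; rewrite hcompM.
have hX0 : hcomp 0 (pi (mX k n i)) = 0 by apply: hpiplus; rewrite hcomp_mX.
have hc0 : hcomp 0 (pi (hcomp e.+1 (c i))) = 0 by apply: hpiplus; rewrite hcompK.
apply: (subalg_sum hSk hSD) => j _; have [j0|j_gt0] := posnP j.
  by rewrite j0 hX0 mul0r; exact: (subalg0 hSk).
have [je|lt_je] := eqVneq (j : nat) e.+2.
  by rewrite je subnn hc0 mulr0; exact: (subalg0 hSk).
by apply: hSM; apply: IH; rewrite ?hpiA //; move: (ltn_ord j) lt_je j_gt0; lia.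
Qed.

Lemma retract_subalg a : A a -> S a.
Proof.
move=> Aa; rewrite (sum_hcomp a); apply: (subalg_sum hSk hSD) => e _.
exact: retract_hcomp_subalg.
Qed.
End RetractionGeneratedInDegreeOne.


Lemma row_base_row (k : fieldType) m n (W : 'M[k]_(m, n)) (i : 'I_(\rank W)) :
  row i (row_base W) = row (widen_ord (rank_leq_col W) i) (row_ebase W).
Proof.
apply/rowP => j; rewrite !mxE /row_base (bigD1 (widen_ord (rank_leq_col W) i)) //=.
rewrite big1 ?addr0; first by rewrite mxE eqxx ltn_ord mul1r.
move=> l /negP ne; rewrite mxE; case: eqP => [h|]; last by rewrite mul0r.
by case: ne; apply/eqP/val_inj.
Qed.

Lemma sigmaX_row_base (k : fieldType) m n (W : 'M[k]_(m, n)) (i : 'I_(\rank W)) :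
  sigmaX (row_ebase W) i = linform (row i (row_base W)).
Proof.
rewrite row_base_row /sigmaX /linform.
case: insubP => [i' _ i'E|]; last by rewrite (leq_trans (ltn_ord i) (rank_leq_col W)).
have -> : i' = widen_ord (rank_leq_col W) i by apply: val_inj.
by apply: eq_bigr => j _; rewrite mxE.
Qed.

Lemma linform_meval_row_base (k : fieldType) m n (W : 'M[k]_(m, n)) v :
  (v <= W)%MS ->
  exists q : mpolyR k (\rank W), linform v = meval (sigmaX (row_ebase W)) q.
Proof.
rewrite -(eq_row_base W) => /submxP[w ->].
exists (\sum_(i < \rank W) mcst _ (w 0 i) * mX k _ i).
rewrite linform_mulmx rmorph_sum; apply: eq_bigr => i _.
by rewrite rmorphM /= meval_mcst meval_mX // sigmaX_row_base.
Qed.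

Lemma exists_row_span (k : fieldType) n (U : 'rV[k]_n -> Prop) :
  exists m (W : 'M[k]_(m, n)), (forall i, U (row i W)) /\ forall v, U v -> (v <= W)%MS.
Proof.
suff ext t m (W : 'M[k]_(m, n)) : (n - \rank W <= t)%N -> (forall i, U (row i W)) ->
    exists m' (W' : 'M[k]_(m', n)),
      (forall i, U (row i W')) /\ forall v, U v -> (v <= W')%MS.
  by apply: (ext n 0%N 0); rewrite ?leq_subr // => -[].
elim: t m W => [|t IH] m W rkW UW.
  exists m, W; split=> // v _; apply: submx_full.
  by rewrite /row_full eqn_leq rank_leq_col -subn_eq0 -leqn0.
have [[v [Uv nvW]]|noU] := classic (exists v, U v /\ ~~ (v <= W)%MS); last first.
  exists m, W; split=> // v Uv; apply/negPn/negP => nvW; by apply: noU; exists v.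
have : (W < col_mx W v)%MS.
  by rewrite ltmxE col_mx_sub negb_and nvW orbT andbT -addsmxE addsmxSl.
rewrite ltmxErank => /andP[_ rk_lt].
apply: (IH _ (col_mx W v)); first by have := rank_leq_col (col_mx W v); lia.
move=> i; case: (splitP i) => j ij.
  by rewrite (_ : i = lshift 1 j) ?rowKu //; apply: val_inj.
by rewrite (_ : i = rshift m j) ?rowKd ?row_id //; apply: val_inj.
Qed.


Theorem corollary5p15 (k : fieldType) (n : nat) (A : mpolyR k n -> Prop)
  (hAk : forall c : k, A (mcst n c))
  (hAD : forall a b, A a -> A b -> A (a + b))
  (hAM : forall a b, A a -> A b -> A (a * b))
  (hAgr : forall a (i : nat), A a -> A (hcomp i a))
  (pi : {rmorphism mpolyR k n -> mpolyR k n})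
  (hpiA : forall b, A (pi b))
  (hpiid : forall a, A a -> pi a = a)
  (hpiplus : forall b, hcomp 0 b = 0 -> hcomp 0 (pi b) = 0) :
  exists (s : 'M[k]_n) (d : nat),
    s \in unitmx /\ (d <= n)%N /\
    (forall b, A b <-> exists q : mpolyR k d, b = meval (sigmaX s) q).
Proof.
have [m [W [WA Wspan]]] := exists_row_span (fun v => A (linform v)).
have sigmaA i : (i < \rank W)%N -> A (sigmaX (row_ebase W) i).
  move=> lt_ir; rewrite (sigmaX_row_base (Ordinal lt_ir)).
  have /submxP[u ->] : (row (Ordinal lt_ir) (row_base W) <= W)%MS.
    by rewrite (submx_trans (row_sub _ _)) ?eq_row_base.
  exact: subalg_linform_mulmx.
exists (row_ebase W), (\rank W); split; first exact: row_ebase_unit.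
split=> [|b]; first exact: rank_leq_col.
split=> [Ab|[q ->]]; last exact: subalg_meval.
apply: (retract_subalg hAgr hpiA hpiid hpiplus
  (S := fun b => exists q, b = meval (sigmaX (row_ebase W)) q)) => //.
- by move=> c; exists (mcst _ c); rewrite meval_mcst.
- by move=> _ _ [q1 ->] [q2 ->]; exists (q1 + q2); rewrite rmorphD.
- by move=> _ _ [q1 ->] [q2 ->]; exists (q1 * q2); rewrite rmorphM.
- move=> a Aa; have [v hv] := hcomp1_linform a.
  by rewrite hv; apply/linform_meval_row_base/Wspan; rewrite -hv; exact: hAgr.
Qed.
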